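(* Let $X$ be a continuum, let $n\geq 2$ be an integer, and let $f:X\to X$ be a map. Consider the statements: (1) $f$ is sensitive; (2) $F_n(f)$ is sensitive; (3) $SF_n(f)$ is sensitive. Then (3) implies (2), and (2) implies (1).
   Context: A continuum is a nonempty compact connected metric space $(X,d)$. For $n\in\mathbb{N}$, $F_n(X)$ is the set of nonempty subsets of $X$ with at most $n$ points, with the Hausdorff metric $d_H$; $F_1(X)=\{\{x\}:x\in X\}$. For $f:X\to X$, $F_n(f):F_n(X)\to F_n(X)$ is $F_n(f)(A)=f(A)$. For $n\geq 2$, $SF_n(X)$ is the quotient space $F_n(X)/F_1(X)$ (collapsing $F_1(X)$ to a point), $q:F_n(X)\to SF_n(X)$ the quotient map and $F_X=q(F_1(X))$. The induced map $SF_n(f):SF_n(X)\to SF_n(X)$ is $SF_n(f)(\chi)=q(F_n(f)(q^{-1}(\chi)))$ if $\chi\neq F_X$ and $SF_n(f)(F_X)=F_X$. $SF_n(X)$ carries the metric $\rho(\chi_1,\chi_2)=\mathcal{H}^2(F_1(X)\cup q^{-1}(\chi_1),F_1(X)\cup q^{-1}(\chi_2))$, where $\mathcal{H}^2$ is the Hausdorff metric on closed subsets of $F_n(X)$ induced by $d_H$. A map $g$ on a metric space $(Z,D)$ is sensitive if there is $\delta>0$ such that for every nonempty open $U\subseteq Z$ there exist $x,y\in U$ and $m\in\mathbb{N}$ with $D(g^m(x),g^m(y))>\delta$ (with $D=d,d_H,\rho$ for $f,F_n(f),SF_n(f)$ respectively). *)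

From HB Require Import structures.
From mathcomp Require Import all_boot all_order all_algebra.
From mathcomp Require Import boolp classical_sets reals.
From Stdlib Require List.
Set Implicit Arguments. Unset Strict Implicit. Unset Printing Implicit Defensive.
Import Order.TTheory GRing.Theory Num.Theory.
Local Open Scope classical_set_scope.
Local Open Scope ring_scope.

Section Defs.
Context {R : realType}.

Definition is_metric {X : Type} (d : X -> X -> R) : Prop :=
  [/\ (forall x y, 0 <= d x y),
      (forall x y, d x y = 0 <-> x = y),
      (forall x y, d x y = d y x) &
      (forall x y z, d x z <= d x y + d y z)].

Definition metric_open {Z : Type} (D : Z -> Z -> R) (S U : set Z) : Prop :=
  U `<=` S /\
  forall z, U z -> exists2 r : R, 0 < r & forall w, S w -> D z w < r -> U w.

Definition metric_compact {X : Type} (d : X -> X -> R) : Prop :=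
  forall (I : Type) (U : I -> set X),
    (forall i, metric_open d setT (U i)) ->
    (forall x, exists i, U i x) ->
    exists s : list I, forall x, exists2 i, List.In i s & U i x.

Definition metric_connected {X : Type} (d : X -> X -> R) : Prop :=
  ~ exists U V : set X,
      [/\ metric_open d setT U, metric_open d setT V,
          U !=set0, V !=set0 &
          (U `&` V = set0 /\ U `|` V = setT)].

Definition continuum {X : Type} (d : X -> X -> R) : Prop :=
  [/\ is_metric d, (exists x : X, True), metric_compact d & metric_connected d].

Definition metric_continuous {X : Type} (d : X -> X -> R) (f : X -> X) : Prop :=
  forall x (e : R), 0 < e -> exists2 del : R, 0 < del &
    forall y, d x y < del -> d (f x) (f y) < e.

Definition hausdorff {Z : Type} (D : Z -> Z -> R) (A B : set Z) : R :=
  Num.max (sup [set inf [set D a b | b in B] | a in A])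
          (sup [set inf [set D a b | a in A] | b in B]).

Definition Fn {X : Type} (n : nat) : set (set X) :=
  [set A | exists s : list X,
     [/\ s <> nil, (length s <= n)%N & forall x, A x <-> List.In x s]].

Definition dH {X : Type} (d : X -> X -> R) : set X -> set X -> R := hausdorff d.

Definition Fn_map {X : Type} (f : X -> X) : set X -> set X := fun A => f @` A.

(** SF_n(X): a point chi is represented by its fibre q^{-1}(chi) ⊆ F_n(X):
    either F_1(X) (the point F_X) or a singleton {A} with A in F_n(X) \ F_1(X). *)
Definition SFn {X : Type} (n : nat) : set (set (set X)) :=
  [set chi | chi = Fn 1 \/ exists A, [/\ Fn n A, ~ Fn 1 A & chi = [set A]]].

Definition qmap {X : Type} (A : set X) : set (set X) :=
  if pselect (Fn 1 A) then Fn 1 else [set A].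

Definition SFn_map {X : Type} (f : X -> X) (chi : set (set X)) : set (set X) :=
  if pselect (chi = Fn 1) then Fn 1
  else [set B | exists A, chi A /\ qmap (Fn_map f A) B].

(** rho(chi1, chi2) = H^2(F_1(X) ∪ q^{-1}(chi1), F_1(X) ∪ q^{-1}(chi2)) *)
Definition rho {X : Type} (d : X -> X -> R) (chi1 chi2 : set (set X)) : R :=
  hausdorff (dH d) (Fn 1 `|` chi1) (Fn 1 `|` chi2).

Definition sensitive {Z : Type} (S : set Z) (D : Z -> Z -> R) (g : Z -> Z) : Prop :=
  exists2 del : R, 0 < del &
    forall U : set Z, metric_open D S U -> U !=set0 ->
      exists x y (m : nat), [/\ U x, U y, (0 < m)%N & del < D (iter m g x) (iter m g y)].

End Defs.

From HB Require Import structures.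
From mathcomp Require Import all_boot all_order all_algebra.
From mathcomp Require Import boolp classical_sets reals lra.
From Stdlib Require List.
Set Implicit Arguments. Unset Strict Implicit. Unset Printing Implicit Defensive.
Import Order.TTheory GRing.Theory Num.Theory.
Local Open Scope classical_set_scope.
Local Open Scope ring_scope.

(** (2) => (1): the finite subsets of an open set U of X form an open set of
    F_n(X); if f^m(A) and f^m(B) are more than del apart in the Hausdorff
    metric for two such subsets, some a in A and b in B have
    d(f^m a, f^m b) > del.

    (3) => (2): the quotient map q is 1-Lipschitz from (F_n(X), d_H) to
    (SF_n(X), rho) and intertwines F_n(f) with SF_n(f).  A nonempty open
    U of F_n(X) contains a set with two points, because a nondegenerate
    continuum has no isolated points, and the non-singleton members of U form
    an open set of SF_n(X): a set containing two points at distance s is at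
    d_H-distance at least s/2 from F_1(X). *)

Section NonnegSupInf.
Variable R : realType.
Implicit Types (E : set R) (e M : R).

(* [sup] and [inf] are [0] on sets that have no supremum or infimum, so for
   nonnegative sets no boundedness hypothesis is needed below. *)
Lemma sup_ge0 E : (forall e, E e -> 0 <= e) -> 0 <= sup E.
Proof.
move=> E_ge0; have [supE|/sup_out->//] := pselect (has_sup E).
have [[e Ee] ubE] := supE; exact: le_trans (E_ge0 _ Ee) (ub_le_sup ubE Ee).
Qed.

Lemma sup_le_nonneg E M : 0 <= M -> (forall e, E e -> e <= M) -> sup E <= M.
Proof.
move=> M_ge0 EM; have [E0|/nonemptyPn->] := pselect (E !=set0); last by rewrite sup0.
exact: ge_sup.
Qed.

Lemma inf_ge0 E : (forall e, E e -> 0 <= e) -> 0 <= inf E.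
Proof.
move=> E_ge0; have [[E0 _]|/inf_out->//] := pselect (has_inf E).
exact: lb_le_inf.
Qed.

Lemma inf_le_nonneg E e : (forall e, E e -> 0 <= e) -> E e -> inf E <= e.
Proof. by move=> E_ge0 Ee; apply: ge_inf => //; exists 0. Qed.

End NonnegSupInf.

Lemma list_ub (R : realType) (T : Type) (g : T -> R) (s : list T) :
  exists M, forall x, List.In x s -> g x <= M.
Proof.
elim: s => [|a s [M ubM]]; first by exists 0.
exists (Num.max (g a) M) => x /= [<-|/ubM xM]; by rewrite le_max ?lexx ?xM ?orbT.
Qed.

Section Hausdorff.
Variables (R : realType) (Z : Type) (D : Z -> Z -> R).
Hypothesis D_ge0 : forall x y, 0 <= D x y.
Implicit Types A B : set Z.

Lemma hausdorffC A B : hausdorff D A B = hausdorff (fun x y => D y x) B A.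
Proof. by rewrite /hausdorff maxC. Qed.

Lemma hausdorff_ge0 A B : 0 <= hausdorff D A B.
Proof.
rewrite /hausdorff le_max; apply/orP; left; apply: sup_ge0 => _ [a _ <-].
by apply: inf_ge0 => _ [b _ <-].
Qed.

Lemma hausdorff_le A B e : 0 <= e ->
  (forall a, A a -> exists2 b, B b & D a b <= e) ->
  (forall b, B b -> exists2 a, A a & D a b <= e) ->
  hausdorff D A B <= e.
Proof.
move=> e_ge0 nearB nearA; rewrite /hausdorff ge_max.
apply/andP; split; apply: sup_le_nonneg => // _ [x Ax <-].
- have [b Bb le_e] := nearB _ Ax; apply: le_trans le_e.
  by apply: inf_le_nonneg; [move=> _ [? _ <-]|exists b].
- have [a Aa le_e] := nearA _ Ax; apply: le_trans le_e.
  by apply: inf_le_nonneg; [move=> _ [? _ <-]|exists a].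
Qed.

Lemma hausdorff_id A : (forall a, D a a = 0) -> hausdorff D A A = 0.
Proof.
move=> Daa; apply/eqP; rewrite eq_le hausdorff_ge0 andbT.
by apply: hausdorff_le => // [a Aa|b Bb]; [exists a|exists b]; rewrite ?Daa.
Qed.

Lemma hausdorff_gt A B e : A !=set0 -> B !=set0 -> e < hausdorff D A B ->
  exists a b, [/\ A a, B b & e < D a b].
Proof.
move=> [a0 Aa0] [b0 Bb0]; rewrite /hausdorff lt_max => /orP[].
- case/sup_gt; first by exists (inf [set D a0 b | b in B]), a0.
  move=> _ [a Aa <-] e_lt; exists a, b0; split => //.
  by apply: lt_le_trans e_lt _; apply: inf_le_nonneg => [_ [? _ <-]|]//; exists b0.
- case/sup_gt; first by exists (inf [set D a b0 | a in A]), b0.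
  move=> _ [b Bb <-] e_lt; exists a0, b; split => //.
  by apply: lt_le_trans e_lt _; apply: inf_le_nonneg => [_ [? _ <-]|]//; exists a0.
Qed.

(* The bound [M] is needed because of the junk value [sup E = 0] for
   unbounded [E]. *)
Lemma inf_le_hausdorff A B a M :
  (forall a', A a' -> inf [set D a' b | b in B] <= M) ->
  A a -> inf [set D a b | b in B] <= hausdorff D A B.
Proof.
move=> ubM Aa; rewrite /hausdorff le_max; apply/orP; left.
by apply: ub_le_sup; [exists M => _ [a' Aa' <-]; apply: ubM|exists a].
Qed.

Lemma hausdorff_lt_near A B a M r :
  (forall a', A a' -> inf [set D a' b | b in B] <= M) ->
  B !=set0 -> A a -> hausdorff D A B < r -> exists2 b, B b & D a b < r.
Proof.
move=> ubM [b0 Bb0] Aa /(le_lt_trans (inf_le_hausdorff ubM Aa)).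
case/inf_lt; first by exists (D a b0), b0.
by move=> _ [b Bb <-]; exists b.
Qed.

End Hausdorff.

Lemma not_sensitive_point (R : realType) (Z : Type) (S : set Z) (D : Z -> Z -> R)
    (g : Z -> Z) (z : Z) :
  S = [set z] -> g z = z -> D z z = 0 -> ~ sensitive S D g.
Proof.
move=> -> gz Dzz [del del_gt0 sens].
have [||x [y [m [-> -> _]]]] := sens [set z]; [|by exists z|].
  by split => // w ->; exists 1.
have -> : iter m g z = z by elim: m => //= m ->.
by rewrite Dzz ltNge (ltW del_gt0).
Qed.

Section FiniteSubsets.
Variable X : Type.
Implicit Types (A B : set X) (f : X -> X).

Lemma Fn_nonempty n A : Fn n A -> A !=set0.
Proof. by case=> -[|x s] [] // _ _ As; exists x; apply/As; left. Qed.

Lemma Fn_set1 n (x : X) : (0 < n)%N -> Fn n [set x].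
Proof. by exists [:: x]; split => //= y; split => [->|[<-|[]]]; [left|]. Qed.

Lemma Fn_set2 n (x y : X) : (1 < n)%N -> Fn n ([set x] `|` [set y]).
Proof.
exists [:: x; y]; split => //= z.
by split => [[->|->]|[<-|[<-|[]]]]; [left|right; left|left|right].
Qed.

Lemma Fn1P A : Fn 1 A <-> exists x, A = [set x].
Proof.
split; last by case=> x ->; apply: Fn_set1.
case=> -[|x [|y s]] [] //= _ _ As; exists x.
by apply/seteqP; split => z /=; [move/As => [<-|[]]|move=> ->; apply/As; left].
Qed.

Lemma not_Fn1_two_points A : A !=set0 -> ~ Fn 1 A ->
  exists a1 a2, [/\ A a1, A a2 & a1 <> a2].
Proof.
move=> [a0 Aa0] nA; apply: contrapT => no2; apply/nA/Fn1P; exists a0.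
apply/seteqP; split => [z Az|_ ->] //=.
by apply: contrapT => za0; apply: no2; exists z, a0.
Qed.

Lemma Fn1_image f A : Fn 1 A -> Fn 1 (f @` A).
Proof. by case/Fn1P=> x ->; rewrite image_set1; apply: Fn_set1. Qed.

Lemma iter_Fn_map f m A : iter m (Fn_map f) A = iter m f @` A.
Proof.
elim: m => [|m IH]; first exact/esym/image_id.
by rewrite /= IH /Fn_map image_comp.
Qed.

Lemma qmap_F1 A : Fn 1 A -> qmap A = Fn 1.
Proof. by rewrite /qmap; case: pselect. Qed.

Lemma qmap_non_F1 A : ~ Fn 1 A -> qmap A = [set A].
Proof. by rewrite /qmap; case: pselect. Qed.

Lemma qmap_fibre_self A : (Fn 1 `|` qmap A) A.
Proof.
have [FA|nA] := pselect (Fn 1 A); first by rewrite qmap_F1 //; left.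
by rewrite qmap_non_F1 //; right.
Qed.

Lemma qmap_fibreP A C : (Fn 1 `|` qmap A) C -> Fn 1 C \/ C = A.
Proof.
case=> [|]; first by left.
have [FA|nA] := pselect (Fn 1 A); first by rewrite qmap_F1 //; left.
by rewrite qmap_non_F1 // => ->; right.
Qed.

Lemma SFn_map_F1 f : SFn_map f (Fn 1) = Fn 1.
Proof. by rewrite /SFn_map; case: pselect. Qed.

Lemma SFn_map_qmap f A : SFn_map f (qmap A) = qmap (Fn_map f A).
Proof.
have [FA|nA] := pselect (Fn 1 A).
  by rewrite !qmap_F1 ?SFn_map_F1 //; apply: Fn1_image.
rewrite qmap_non_F1 // /SFn_map; case: pselect => [eA|_] /=.
  by case: nA; rewrite -eA.
by apply/seteqP; split => [C [_ [-> //]]|C qC]; exists A.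
Qed.

Lemma iter_SFn_map_qmap f m A :
  iter m (SFn_map f) (qmap A) = qmap (iter m (Fn_map f) A).
Proof. by elim: m => //= m ->; rewrite SFn_map_qmap. Qed.

End FiniteSubsets.

Section MetricSpace.
Variables (R : realType) (X : Type) (d : X -> X -> R).
Hypothesis d_metric : is_metric d.
Implicit Types (A B E : set X) (f : X -> X) (x : X).

Let d_ge0 x y : 0 <= d x y. Proof. by case: d_metric. Qed.
Let d_xx x : d x x = 0. Proof. by case: d_metric => _ eq0 _ _; apply/eq0. Qed.
Let d_sym x y : d x y = d y x. Proof. by case: d_metric. Qed.
Let d_tri x y z : d x z <= d x y + d y z. Proof. by case: d_metric. Qed.
Let d_gt0 x y : x <> y -> 0 < d x y.
Proof.
case: d_metric => _ eq0 _ _ xy; rewrite lt_neqAle d_ge0 andbT eq_sym.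
by apply/eqP => /eq0.
Qed.

Lemma dH_ge0 A B : 0 <= dH d A B. Proof. exact: hausdorff_ge0. Qed.

Lemma dH_id A : dH d A A = 0. Proof. exact: hausdorff_id. Qed.

Lemma dH_sym A B : dH d A B = dH d B A.
Proof. by rewrite /dH hausdorffC; congr hausdorff; apply/funext => x; apply/funext. Qed.

Lemma Fn_inf_bounded n A B : Fn n A -> B !=set0 ->
  exists M, forall a, A a -> inf [set d a b | b in B] <= M.
Proof.
case=> s [_ _ As] [b0 Bb0]; have [M ubM] := list_ub (d^~ b0) s.
exists M => a /As as_; apply: le_trans (ubM _ as_).
by apply: inf_le_nonneg; [move=> _ [? _ <-]|exists b0].
Qed.

Lemma dH_lt_near n A B a r : Fn n A -> B !=set0 -> A a -> dH d A B < r ->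
  exists2 b, B b & d a b < r.
Proof.
move=> FA B0; have [M ubM] := Fn_inf_bounded FA B0.
exact: hausdorff_lt_near ubM B0.
Qed.

Lemma dH_F1_ge_half n B b1 b2 E : Fn n B -> B b1 -> B b2 -> Fn 1 E ->
  d b1 b2 / 2 <= dH d B E.
Proof.
move=> FB Bb1 Bb2 /Fn1P[z ->].
have [M ubM] : exists M, forall b, B b -> inf [set d b e | e in [set z]] <= M.
  by apply: Fn_inf_bounded FB _; exists z.
have near b : B b -> d b z <= dH d B [set z].
  by move=> Bb; have := inf_le_hausdorff ubM Bb; rewrite image_set1 inf1.
have := d_tri b1 z b2; rewrite (d_sym z b2).
have := near _ Bb1; have := near _ Bb2; lra.
Qed.

Lemma metric_open_list_radius U (s : list X) : metric_open d setT U ->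
  (forall x, List.In x s -> U x) ->
  exists2 r, 0 < r & forall x w, List.In x s -> d x w < r -> U w.
Proof.
case=> _ Uopen; elim: s => [|a s IH] sU; first by exists 1.
have [r1 r1_gt0 ball1] := Uopen a (sU a (or_introl erefl)).
have [r2 r2_gt0 ball2] := IH (fun x xs => sU x (or_intror xs)).
exists (Num.min r1 r2); first by rewrite lt_min r1_gt0 r2_gt0.
move=> x w /= [<-|xs]; rewrite lt_min => /andP[lt1 lt2]; first exact: ball1.
exact: ball2 xs lt2.
Qed.

Lemma Fn_subsets_open n U : metric_open d setT U ->
  metric_open (dH d) (Fn n) [set A | Fn n A /\ A `<=` U].
Proof.
move=> Uopen; split => [A []//|A [FA AU]].
have [s [_ _ As]] := FA.
have [r r_gt0 ballU] :=
  metric_open_list_radius Uopen (fun x xs => AU x (proj2 (As x) xs)).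
exists r => // W FW AW; split => // w Ww.
rewrite dH_sym in AW; have [a Aa] := dH_lt_near FW (Fn_nonempty FA) Ww AW.
by rewrite d_sym => /(ballU _ _ (proj1 (As a) Aa)).
Qed.

Lemma sensitive_Fn_sensitive n f : (0 < n)%N ->
  sensitive (Fn n) (dH d) (Fn_map f) -> sensitive setT d f.
Proof.
move=> n_gt0 [del del_gt0 sens]; exists del => // U Uopen [x0 Ux0].
have [|A [B [m [[FA AU] [FB BU] m_gt0]]]] := sens _ (Fn_subsets_open n Uopen).
  by exists [set x0]; split; [apply: Fn_set1|move=> _ ->].
rewrite !iter_Fn_map => /(hausdorff_gt d_ge0) [].
- exact/image_nonempty/(Fn_nonempty FA).
- exact/image_nonempty/(Fn_nonempty FB).
move=> _ [_ [[a Aa <-] [b Bb <-] lt_del]].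
by exists a, b, m; split => //; [apply: AU|apply: BU].
Qed.

Lemma connected_not_isolated x r : metric_connected d -> (exists y, y <> x) ->
  0 < r -> exists2 z, z <> x & d x z < r.
Proof.
move=> dconn [y yx] r_gt0; apply: contrapT => isolated; apply: dconn.
have ball_x z : d x z < r -> z = x.
  by move=> xz; apply: contrapT => zx; apply: isolated; exists z.
exists [set x], [set z | z <> x]; split.
- by split => // _ ->; exists r => // w _ /ball_x.
- split => // z zx; exists (d x z); first by apply: d_gt0 => xz; apply: zx.
  by move=> w _ + wx; rewrite wx d_sym ltxx.
- by exists x.
- by exists y.
- split; apply/seteqP; split => z //; first by case=> -> /(_ erefl).
  by move=> _; have [->|zx] := pselect (z = x); [left|right].
Qed.

Lemma open_has_non_F1 n U :
  metric_connected d -> (forall x : X, exists y, y <> x) -> (1 < n)%N ->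
  metric_open (dH d) (Fn n) U -> U !=set0 ->
  exists2 A, U A & ~ Fn 1 A.
Proof.
move=> dconn nontriv n_gt1 [_ Uopen] [A0 UA0].
have [/Fn1P[x eA0]|] := pselect (Fn 1 A0); last by exists A0.
have [r r_gt0 ballU] := Uopen _ UA0.
have [y yx dxy] := connected_not_isolated dconn (nontriv x) r_gt0.
exists ([set x] `|` [set y]).
  apply: ballU; first exact: Fn_set2.
  rewrite eA0; apply: le_lt_trans dxy; apply: (hausdorff_le d_ge0) => //.
    by move=> _ ->; exists x; [left|rewrite d_xx].
  by move=> _ [->|->]; exists x; rewrite // d_xx.
case/Fn1P => z ez.
have Ex : [set z] x by rewrite -ez; left.
have Ey : [set z] y by rewrite -ez; right.
by apply: yx; rewrite Ex Ey.
Qed.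

Lemma rho_set1_lt_near B psi r : B !=set0 -> rho d [set B] psi < r ->
  exists2 E, (Fn 1 `|` psi) E & dH d B E < r.
Proof.
move=> [b Bb]; have F1b : Fn 1 [set b] by apply: Fn_set1.
have inf_le C E : (Fn 1 `|` psi) E ->
    inf [set dH d C D | D in Fn 1 `|` psi] <= dH d C E.
  by move=> E_in; apply: inf_le_nonneg => [_ [? _ <-]|]; [apply: dH_ge0|exists E].
apply: (hausdorff_lt_near (M := dH d B [set b])); last by right.
- move=> C [FC|->]; last exact: inf_le (or_introl F1b).
  by apply: le_trans (inf_le C C (or_introl FC)) _; rewrite dH_id dH_ge0.
- by exists [set b]; left.
Qed.

Lemma SFn_open_non_F1 n U : metric_open (dH d) (Fn n) U ->
  metric_open (rho d) (SFn n) [set [set B] | B in U `&` ~` Fn 1].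
Proof.
move=> [UFn Uopen]; split => [_ [B [UB nB] <-]|_ [B [UB nB] <-]].
  by right; exists B; split => //; apply: UFn.
have FB := UFn _ UB.
have [b1 [b2 [Bb1 Bb2 b12]]] := not_Fn1_two_points (Fn_nonempty FB) nB.
have [r r_gt0 ballU] := Uopen _ UB.
(* No singleton lies within [d b1 b2 / 2] of [B], so a point [psi] of SF_n
   that close to [[set B]] is some [[set E]] with [E] close to [B]. *)
exists (Num.min r (d b1 b2 / 2)) => [|psi SFpsi].
  by rewrite lt_min r_gt0 divr_gt0 ?d_gt0.
move=> /(rho_set1_lt_near (Fn_nonempty FB)) [E E_in].
rewrite lt_min => /andP[BE_r BE_half].
have nE : ~ Fn 1 E by move=> /(dH_F1_ge_half FB Bb1 Bb2); rewrite leNgt BE_half.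
case: E_in => [//|psiE].
case: SFpsi => [psiF1|[E' [FE' _ epsi]]]; first by move: psiE; rewrite psiF1.
move: psiE; rewrite epsi => /= eE; subst E'.
by exists E => //; split => //; apply: ballU.
Qed.

Lemma rho_qmap_le A B : rho d (qmap A) (qmap B) <= dH d A B.
Proof.
apply: (hausdorff_le dH_ge0) (dH_ge0 A B) _ _ => C /qmap_fibreP [FC|->].
- by exists C; [left|rewrite dH_id dH_ge0].
- by exists B => //; apply: qmap_fibre_self.
- by exists C; [left|rewrite dH_id dH_ge0].
- by exists A => //; apply: qmap_fibre_self.
Qed.

Lemma sensitive_SFn_nontrivial n f x :
  sensitive (SFn n) (rho d) (SFn_map f) -> exists y, y <> x.
Proof.
move=> sens; apply: contrapT => single.
have all_x y : y = x by apply: contrapT => yx; apply: single; exists y.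
apply: (not_sensitive_point (z := Fn 1)) sens;
  [|exact: SFn_map_F1|exact: hausdorff_id dH_ge0 _ dH_id].
apply/seteqP; split => [chi [//|[A [FA nA _]]]|_ ->]; last by left.
case: nA; apply/Fn1P; exists x; apply/seteqP; split => [y _|_ ->].
  exact: all_x.
by have [a] := Fn_nonempty FA; rewrite (all_x a).
Qed.

Lemma sensitive_SFn_sensitive_Fn n f : metric_connected d -> (1 < n)%N ->
  sensitive (SFn n) (rho d) (SFn_map f) -> sensitive (Fn n) (dH d) (Fn_map f).
Proof.
move=> dconn n_gt1 sensSF; have [del del_gt0 sens] := sensSF.
exists del => // U Uopen U0.
have nontriv x := sensitive_SFn_nontrivial x sensSF.
have [A UA nA] := open_has_non_F1 dconn nontriv n_gt1 Uopen U0.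
have [|_ [_ [m [[B1 [UB1 nB1] <-] [B2 [UB2 nB2] <-] m_gt0]]]] :=
  sens _ (SFn_open_non_F1 Uopen).
  by exists [set A], A.
rewrite -(qmap_non_F1 nB1) -(qmap_non_F1 nB2) !iter_SFn_map_qmap => lt_del.
by exists B1, B2, m; split => //; apply: lt_le_trans lt_del (rho_qmap_le _ _).
Qed.

End MetricSpace.

Theorem theorem1 (R : realType) (X : Type) (d : X -> X -> R) (n : nat) (f : X -> X) :
  continuum d -> (2 <= n)%N -> metric_continuous d f ->
  (sensitive (SFn (X:=X) n) (rho d) (SFn_map f) -> sensitive (Fn n) (dH d) (Fn_map f)) /\
  (sensitive (Fn n) (dH d) (Fn_map f) -> sensitive setT d f).
Proof.
move=> [d_metric _ _ dconn] n_gt1 _; split.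
- exact: sensitive_SFn_sensitive_Fn.
- exact: (sensitive_Fn_sensitive (f := f) d_metric (ltnW n_gt1)).
Qed.
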